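(* Let $\Delta$ be a nonempty $\Gamma$-semimodule. Then its dual satisfies $\Delta^*=(2\delta-1)-(\mathbb{Z}\setminus\Delta)=\{2\delta-1-x: x\in\mathbb{Z}\setminus\Delta\}$.
   Context: Let $m,n$ be coprime positive integers, $\Gamma=\{am+bn:a,b\in\mathbb{Z}_{\ge0}\}$ and $\delta=\frac{(m-1)(n-1)}2$. A $\Gamma$-semimodule is a subset $\Delta\subset\mathbb{Z}_{\ge0}$ with $\Delta+\Gamma\subset\Delta$. The dual semimodule is $\Delta^*=\{\varphi\in\mathbb{Z}:\varphi+\Delta\subset\Gamma\}$. *)

From Stdlib Require Export ZArith Lia.
Open Scope Z_scope.

Definition Gamma (m n : Z) (x : Z) : Prop :=
  exists a b : Z, 0 <= a /\ 0 <= b /\ x = a * m + b * n.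

Definition delta (m n : Z) : Z := ((m - 1) * (n - 1)) / 2.

Definition is_semimodule (m n : Z) (D : Z -> Prop) : Prop :=
  (forall x, D x -> 0 <= x) /\
  (forall x g, D x -> Gamma m n g -> D (x + g)).

Definition dual (m n : Z) (D : Z -> Prop) : Z -> Prop :=
  fun phi => forall d, D d -> Gamma m n (phi + d).

(* With c = (m-1)(n-1), the map x |-> c - 1 - x exchanges Gamma and its
   complement in Z: an integer and its mirror image cannot both lie in Gamma,
   since adding two such representations gives a representation of m n with
   positive coefficients, impossible for coprime m, n; and one of them always
   lies in Gamma, by reducing a Bezout representation of x modulo m.
   Since 2 delta = c, phi lies in the dual of Delta exactly when the mirror
   image of phi misses Delta. *)
From Stdlib Require Import ZArith Znumtheory Lia.

Definition conductor (m n : Z) : Z := (m - 1) * (n - 1).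

Section Symmetry.

Variables m n : Z.
Hypothesis coprime_mn : Z.gcd m n = 1.

Lemma two_delta : 2 * delta m n = conductor m n.
Proof.
  unfold delta, conductor.
  assert (odd_mn : Z.Odd m \/ Z.Odd n).
  { destruct (Z.Even_or_Odd m) as [[k Hk]|]; [|now left].
    destruct (Z.Even_or_Odd n) as [[l Hl]|]; [|now right].
    assert (two_dvd : (2 | Z.gcd m n)).
    { apply Z.gcd_greatest; [exists k | exists l]; lia. }
    rewrite coprime_mn in two_dvd.
    apply Z.divide_pos_le in two_dvd; lia. }
  destruct odd_mn as [[k Hk] | [k Hk]]; subst.
  - replace ((2 * k + 1 - 1) * (n - 1)) with ((k * (n - 1)) * 2) by ring.
    rewrite Z.div_mul by lia; ring.
  - replace ((m - 1) * (2 * k + 1 - 1)) with (((m - 1) * k) * 2) by ring.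
    rewrite Z.div_mul by lia; ring.
Qed.

Hypotheses (m_gt0 : 0 < m) (n_gt0 : 0 < n).

Lemma Gamma0 : Gamma m n 0.
Proof. exists 0, 0; lia. Qed.

Lemma Gamma_conductor_sym_excl x :
  Gamma m n x -> Gamma m n (conductor m n - 1 - x) -> False.
Proof.
  unfold conductor.
  intros [a [b [Ha [Hb ->]]]] [a' [b' [Ha' [Hb' Hx']]]].
  assert (Hmn : (a + a' + 1) * m + (b + b' + 1) * n = m * n) by lia.
  assert (m_dvd : (m | b + b' + 1)).
  { apply Z.gauss with n; [exists (n - (a + a' + 1)); lia | exact coprime_mn]. }
  assert (n_dvd : (n | a + a' + 1)).
  { apply Z.gauss with m; [exists (m - (b + b' + 1)); lia |].
    now rewrite Z.gcd_comm. }
  apply Z.divide_pos_le in m_dvd; [|lia].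
  apply Z.divide_pos_le in n_dvd; [|lia].
  nia.
Qed.

Lemma Gamma_conductor_sym_or x :
  Gamma m n x \/ Gamma m n (conductor m n - 1 - x).
Proof.
  unfold conductor.
  assert (Bezout_mn : Bezout m n 1).
  { apply Zis_gcd_bezout; rewrite <- coprime_mn; apply Zgcd_is_gcd. }
  destruct Bezout_mn as [u v Huv].
  (* Normalise x = (x u) m + (x v) n so that the coefficient of n is in [0, m). *)
  set (b := (x * v) mod m).
  assert (Hb : 0 <= b < m) by (apply Z.mod_pos_bound; lia).
  assert (Hq : x * v = m * ((x * v) / m) + b) by (apply Z.div_mod; lia).
  set (q := (x * v) / m) in *.
  set (a := x * u + q * n).
  assert (Hx : x = a * m + b * n).
  { assert (x = x * (u * m + v * n)) by (rewrite Huv; ring). subst a; nia. }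
  destruct (Z_le_gt_dec 0 a).
  - left; exists a, b; lia.
  - right; exists (- 1 - a), (m - 1 - b); repeat split; lia.
Qed.

End Symmetry.

Theorem mainTheorem9 (m n : Z) (D : Z -> Prop) :
  0 < m -> 0 < n -> Z.gcd m n = 1 ->
  is_semimodule m n D ->
  (exists x, D x) ->
  forall phi : Z,
    dual m n D phi <-> exists x : Z, ~ D x /\ phi = 2 * delta m n - 1 - x.
Proof.
  intros Hm Hn Hg [_ D_closed] _ phi.
  rewrite (two_delta m n Hg).
  split.
  - intros dual_phi; exists (conductor m n - 1 - phi); split; [|lia].
    intros D_mirror; apply (Gamma_conductor_sym_excl m n Hg Hm Hn 0).
    + exact (Gamma0 m n).
    + replace (conductor m n - 1 - 0) with (phi + (conductor m n - 1 - phi))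
        by ring.
      now apply dual_phi.
  - intros [x [notD_x ->]] d D_d.
    destruct (Gamma_conductor_sym_or m n Hg Hm (conductor m n - 1 - x + d))
      as [G|G]; [exact G|].
    exfalso; apply notD_x.
    replace x with (d + (conductor m n - 1 - (conductor m n - 1 - x + d)))
      by ring.
    now apply D_closed.
Qed.
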